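(* Consider $n$ agents with an undirected graph $\mathcal{G}$ on $\{1,\dots,n\}$ and neighbor sets $\mathcal{N}_i$, executing a distributed algorithm of the form $$\theta(k+1)=f(\theta(k),x(k)),\qquad x(k)=g(\theta(k),\eta(k)),\qquad k\in\mathbb{Z}_{\ge0},\qquad \theta(0)=\theta_0,$$ where $f,g:\mathbb{R}^n\times\mathbb{R}^n\to\mathbb{R}^n$ are continuous, the $i$th component of $f$ depends only on $\theta_i$ and $\{x_j\}_{j\in\mathcal{N}_i\cup\{i\}}$, the $i$th component of $g$ depends only on $\theta_i$ and $\eta_i$, and $\boldsymbol{\eta}=\{\eta(k)\}_{k\ge0}$ is a random noise sequence in $\mathbb{R}^n$ with an arbitrary distribution. Then, for any $\delta>0$ and any $\epsilon>0$, it is impossible that both (i) for every initial state $\theta_0\in\mathbb{R}^n$ and every $i\in\{1,\dots,n\}$, $\theta_i(k)$ converges in distribution to $\mathrm{Ave}(\theta_0)=\frac1n\mathbf{1}_n^T\theta_0$ as $k\to\infty$, and (ii) the algorithm is $\epsilon$-differentially private (with adjacency bound $\delta$).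
   Context: For a fixed initial state $\theta_0$, the message sequence $\mathbf{x}=\{x(k)\}_{k\ge0}$ is a deterministic function of the noise sequence; denote this map $X_{\theta_0}:(\mathbb{R}^n)^{\mathbb{N}}\to(\mathbb{R}^n)^{\mathbb{N}}$, $X_{\theta_0}(\boldsymbol{\eta})=\mathbf{x}$. Two initial states $\theta_0^{(1)},\theta_0^{(2)}\in\mathbb{R}^n$ are $\delta$-adjacent if there is $i_0$ with $|\theta^{(2)}_{0,i_0}-\theta^{(1)}_{0,i_0}|\le\delta$ and $\theta^{(2)}_{0,i}=\theta^{(1)}_{0,i}$ for all $i\ne i_0$. The algorithm is $\epsilon$-differentially private if for every pair of $\delta$-adjacent initial states and every Borel set $\mathcal{O}$ of $(\mathbb{R}^n)^{\mathbb{N}}$ (product topology), $\mathbb{P}\{\boldsymbol\eta: X_{\theta_0^{(1)}}(\boldsymbol\eta)\in\mathcal{O}\}\le e^{\epsilon}\,\mathbb{P}\{\boldsymbol\eta: X_{\theta_0^{(2)}}(\boldsymbol\eta)\in\mathcal{O}\}$. *)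

From Stdlib Require Import Reals Lra Arith.
Open Scope R_scope.

Definition Idx (n : nat) : Type := {i : nat | (i < n)%nat}.
Definition Vec (n : nat) : Type := Idx n -> R.

Definition Seq (n : nat) : Type := nat -> Vec n.

Definition coord (n : nat) (v : Vec n) (i : nat) : R :=
  match lt_dec i n with
  | left h => v (exist _ i h)
  | right _ => 0
  end.
Definition Ave (n : nat) (v : Vec n) : R :=
  / INR n * sum_f_R0 (coord n v) (pred n).

Definition continuous2 (n : nat) (h : Vec n -> Vec n -> Vec n) : Prop :=
  forall (a b : Vec n) (i : Idx n) (eps : R), 0 < eps ->
    exists d, 0 < d /\
      forall a' b' : Vec n,
        (forall j, Rabs (a' j - a j) < d) ->
        (forall j, Rabs (b' j - b j) < d) ->
        Rabs (h a' b' i - h a b i) < eps.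

Definition undirected (n : nat) (adj : Idx n -> Idx n -> Prop) : Prop :=
  forall i j, adj i j -> adj j i.

Definition f_local (n : nat) (adj : Idx n -> Idx n -> Prop)
  (f : Vec n -> Vec n -> Vec n) : Prop :=
  forall (th th' x x' : Vec n) (i : Idx n),
    th i = th' i ->
    (forall j, (adj i j \/ j = i) -> x j = x' j) ->
    f th x i = f th' x' i.

Definition g_local (n : nat) (g : Vec n -> Vec n -> Vec n) : Prop :=
  forall (th th' e e' : Vec n) (i : Idx n),
    th i = th' i -> e i = e' i -> g th e i = g th' e' i.

Fixpoint theta (n : nat) (f g : Vec n -> Vec n -> Vec n) (th0 : Vec n)
  (eta : Seq n) (k : nat) : Vec n :=
  match k with
  | O => th0
  | S k' => let t := theta n f g th0 eta k' in f t (g t (eta k'))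
  end.

Definition X (n : nat) (f g : Vec n -> Vec n -> Vec n) (th0 : Vec n)
  (eta : Seq n) : Seq n :=
  fun k => g (theta n f g th0 eta k) (eta k).

(** Product topology on (R^n)^N: open sets. *)
Definition is_open (n : nat) (O : Seq n -> Prop) : Prop :=
  forall s, O s -> exists (N : nat) (d : R), 0 < d /\
    forall t : Seq n,
      (forall k j, (k < N)%nat -> Rabs (t k j - s k j) < d) -> O t.

Definition sigma_algebra {T : Type} (S : (T -> Prop) -> Prop) : Prop :=
  S (fun _ => True) /\
  (forall A, S A -> S (fun x => ~ A x)) /\
  (forall A : nat -> T -> Prop, (forall m, S (A m)) ->
     S (fun x => exists m, A m x)).

Definition Borel (n : nat) (A : Seq n -> Prop) : Prop :=
  forall S : (Seq n -> Prop) -> Prop,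
    sigma_algebra S -> (forall O, is_open n O -> S O) -> S A.

(** Probability measure on the Borel sets of (R^n)^N
    (values on non-Borel sets are irrelevant). *)
Definition prob_measure (n : nat) (mu : (Seq n -> Prop) -> R) : Prop :=
  (forall A, Borel n A -> 0 <= mu A) /\
  mu (fun _ => True) = 1 /\
  (forall A : nat -> Seq n -> Prop,
     (forall m, Borel n (A m)) ->
     (forall m m' s, m <> m' -> A m s -> A m' s -> False) ->
     Un_cv (fun N => sum_f_R0 (fun m => mu (A m)) N)
           (mu (fun s => exists m, A m s))).

(** Convergence in distribution of real random variables Y_k to Y
    (defined on the probability space ((R^n)^N, Borel, mu)):
    the CDFs converge at every continuity point of the limit CDF. *)
Definition conv_in_dist (n : nat) (mu : (Seq n -> Prop) -> R)
  (Yk : nat -> Seq n -> R) (Y : Seq n -> R) : Prop :=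
  forall x : R,
    continuity_pt (fun t => mu (fun eta => Y eta <= t)) x ->
    Un_cv (fun k => mu (fun eta => Yk k eta <= x)) (mu (fun eta => Y eta <= x)).

Definition adjacent (n : nat) (delta : R) (t1 t2 : Vec n) : Prop :=
  exists i0 : Idx n, Rabs (t2 i0 - t1 i0) <= delta /\
    forall i, i <> i0 -> t2 i = t1 i.

Definition diff_private (n : nat) (f g : Vec n -> Vec n -> Vec n)
  (mu : (Seq n -> Prop) -> R) (eps delta : R) : Prop :=
  forall t1 t2 : Vec n, adjacent n delta t1 t2 ->
    forall O : Seq n -> Prop, Borel n O ->
      mu (fun eta => O (X n f g t1 eta)) <=
      exp eps * mu (fun eta => O (X n f g t2 eta)).

(* Agent [i]'s state is computed from its own initial value and the published
   messages alone, so differential privacy of the messages passes to the law of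
   [theta_i(k)] whenever the two adjacent initial states agree at [i]. Perturb
   only agent 0 (by [delta]) and watch agent 1: its state converges to [0] in one
   case and to [delta / n] in the other, so at the threshold [c = delta / (2 n)]
   the probabilities [P(theta_1(k) <= c)] tend to [1] and [0] respectively,
   contradicting [P_1 <= exp eps * P_2]. *)
From Stdlib Require Import Reals Lra Lia Arith FunctionalExtensionality PropExtensionality.
Open Scope R_scope.

Lemma pred_ext {T : Type} (P Q : T -> Prop) : (forall x, P x <-> Q x) -> P = Q.
Proof.
  intros H; apply functional_extensionality; intro x.
  apply propositional_extensionality, H.
Qed.

Lemma cv_const (a : R) : Un_cv (fun _ => a) a.
Proof.
  intros e He; exists O; intros m _.
  unfold Rdist; rewrite Rminus_diag, Rabs_R0; exact He.
Qed.

Lemma cv_le_scaled_absurd (u v : nat -> R) (K : R) :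
  Un_cv u 1 -> Un_cv v 0 -> (forall k, u k <= K * v k) -> False.
Proof.
  intros Hu Hv Huv.
  pose proof (Rle_cv_lim Huv Hu (CV_mult _ _ _ _ (cv_const K) Hv)).
  lra.
Qed.

Section StateOfMessages.

Variables (n : nat) (f : Vec n -> Vec n -> Vec n).

Fixpoint state_of_messages (th0 : Vec n) (x : Seq n) (k : nat) : Vec n :=
  match k with
  | O => th0
  | S k' => f (state_of_messages th0 x k') (x k')
  end.

Lemma theta_state_of_messages g th0 eta k :
  theta n f g th0 eta k = state_of_messages th0 (X n f g th0 eta) k.
Proof.
  induction k as [|k IH]; [reflexivity|].
  cbn [theta state_of_messages]; rewrite <- IH; reflexivity.
Qed.

Lemma state_of_messages_local adj (Hfl : f_local n adj f) th1 th2 i :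
  th1 i = th2 i -> forall x k, state_of_messages th1 x k i = state_of_messages th2 x k i.
Proof.
  intros H x k; induction k as [|k IH]; [exact H|].
  apply Hfl; [exact IH | reflexivity].
Qed.

Lemma uniform_radius (Q : Idx n -> R -> Prop) :
  (forall j d d', 0 < d' -> d' <= d -> Q j d -> Q j d') ->
  (forall j, exists d, 0 < d /\ Q j d) -> exists d, 0 < d /\ forall j, Q j d.
Proof.
  intros Hmono H.
  assert (Hpref : forall m, exists d, 0 < d /\
            forall j (hj : (j < n)%nat), (j < m)%nat -> Q (exist _ j hj) d).
  { induction m as [|m [d [Hd HQ]]].
    - exists 1; split; [lra | intros; lia].
    - destruct (lt_dec m n) as [hm | hm].
      + destruct (H (exist _ m hm)) as [dm [Hdm HQm]].
        assert (Hmin : 0 < Rmin d dm) by (apply Rmin_pos; assumption).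
        exists (Rmin d dm); split; [exact Hmin|].
        intros j hj hjm; destruct (Nat.eq_dec j m) as [-> | Hjm].
        * replace hj with hm by apply Peano_dec.le_unique.
          exact (Hmono _ _ _ Hmin (Rmin_r d dm) HQm).
        * apply (Hmono _ d); [exact Hmin | apply Rmin_l | apply HQ; lia].
      + exists d; split; [exact Hd|]; intros j hj hjm; apply HQ; lia. }
  destruct (Hpref n) as [d [Hd HQ]].
  exists d; split; [exact Hd|]; intros [j hj]; exact (HQ j hj hj).
Qed.

(* Continuity in the product topology: [state_of_messages th0 x k] only reads
   the first [k] messages, each through finitely many continuous maps. *)
Lemma state_of_messages_continuous (Hfc : continuous2 n f) th0 :
  forall k s eps, 0 < eps -> exists N d, 0 < d /\
    forall t, (forall k' j, (k' < N)%nat -> Rabs (t k' j - s k' j) < d) ->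
      forall j, Rabs (state_of_messages th0 t k j - state_of_messages th0 s k j) < eps.
Proof.
  induction k as [|k IH]; intros s eps Heps.
  - exists O, 1; split; [lra|]; intros t _ j.
    cbn [state_of_messages]; rewrite Rminus_diag, Rabs_R0; exact Heps.
  - set (a := state_of_messages th0 s k).
    destruct (uniform_radius (fun j dl => forall a' b' : Vec n,
        (forall j', Rabs (a' j' - a j') < dl) ->
        (forall j', Rabs (b' j' - s k j') < dl) ->
        Rabs (f a' b' j - f a (s k) j) < eps)) as [dl [Hdl Hf]].
    + intros j d d' _ Hle HQ a' b' Ha Hb.
      apply HQ; intro j'; [specialize (Ha j') | specialize (Hb j')]; lra.
    + intro j; destruct (Hfc a (s k) j eps Heps) as [d [Hd Hc]].
      exists d; split; [exact Hd | exact Hc].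
    + destruct (IH s dl Hdl) as [N [d [Hd Hstate]]].
      exists (Nat.max N (S k)), (Rmin d dl); split; [apply Rmin_pos; assumption|].
      intros t Ht j; apply Hf.
      * apply Hstate; intros k' j' Hk'.
        specialize (Ht k' j' ltac:(lia)); pose proof (Rmin_l d dl); lra.
      * intro j'; specialize (Ht k j' ltac:(lia)); pose proof (Rmin_r d dl); lra.
Qed.

End StateOfMessages.

Definition seq_continuous (n : nat) (F : Seq n -> R) : Prop :=
  forall s eps, 0 < eps -> exists N d, 0 < d /\
    forall t, (forall k j, (k < N)%nat -> Rabs (t k j - s k j) < d) ->
      Rabs (F t - F s) < eps.

Lemma Borel_le n (F : Seq n -> R) c :
  seq_continuous n F -> Borel n (fun x => F x <= c).
Proof.
  intros HF S [_ [HC _]] Hopen.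
  replace (fun x => F x <= c) with (fun x => ~ c < F x)
    by (apply pred_ext; intro x; split; [apply Rnot_lt_le | apply Rle_not_lt]).
  apply HC, Hopen; intros s Hs.
  destruct (HF s (F s - c) ltac:(lra)) as [N [d [Hd H]]].
  exists N, d; split; [exact Hd|]; intros t Ht.
  destruct (Rabs_def2 _ _ (H t Ht)); lra.
Qed.

Lemma Borel_empty n : Borel n (fun _ => False).
Proof. intros S _ Hopen; apply Hopen; intros s []. Qed.

(* Countable additivity for the constant family of empty sets: the partial sums
   [(N + 1) * mu set0] must converge to [mu set0]. *)
Lemma prob_measure_empty n mu : prob_measure n mu -> mu (fun _ => False) = 0.
Proof.
  intros [_ [_ Hadd]].
  specialize (Hadd (fun _ _ => False) (fun _ => Borel_empty n) ltac:(intros; contradiction)).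
  cbv beta in Hadd.
  replace (fun s : Seq n => exists _ : nat, False) with (fun _ : Seq n => False) in Hadd
    by (apply pred_ext; intro; split; [contradiction | intros [_ []]]).
  set (m0 := mu (fun _ => False)) in *.
  pose proof (CV_minus _ _ _ _ (CV_shift' _ 1 _ Hadd) Hadd) as Hdiff.
  cbv beta in Hdiff.
  replace (fun N => sum_f_R0 (fun _ => m0) (N + 1) - sum_f_R0 (fun _ => m0) N)
    with (fun _ : nat => m0) in Hdiff.
  { pose proof (UL_sequence _ _ _ Hdiff (cv_const m0)); lra. }
  apply functional_extensionality; intro N.
  rewrite Nat.add_1_r; cbn [sum_f_R0]; ring.
Qed.

Lemma cdf_const_continuity n (mu : (Seq n -> Prop) -> R) a x :
  a <> x -> continuity_pt (fun t => mu (fun _ : Seq n => a <= t)) x.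
Proof.
  intros Hax e He; exists (Rabs (a - x)); split.
  { apply Rabs_pos_lt; lra. }
  intros y [_ Hy]; simpl in *; unfold Rdist in *.
  replace (fun _ : Seq n => a <= y) with (fun _ : Seq n => a <= x).
  { rewrite Rminus_diag, Rabs_R0; exact He. }
  apply pred_ext; intros _.
  unfold Rabs in Hy; do 2 destruct (Rcase_abs _) in Hy; split; intro; lra.
Qed.

Section ConvergenceToConstant.

Variables (n : nat) (mu : (Seq n -> Prop) -> R) (Hmu : prob_measure n mu).
Variables (Yk : nat -> Seq n -> R) (a c : R).
Hypothesis HY : conv_in_dist n mu Yk (fun _ => a).

Lemma conv_in_dist_const_below :
  a < c -> Un_cv (fun k => mu (fun eta => Yk k eta <= c)) 1.
Proof.
  intro Hac; destruct Hmu as [_ [Htot _]].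
  specialize (HY c (cdf_const_continuity n mu a c ltac:(lra))).
  cbv beta in HY.
  replace (fun _ : Seq n => a <= c) with (fun _ : Seq n => True) in HY
    by (apply pred_ext; split; intro; [lra | exact I]).
  rewrite Htot in HY; exact HY.
Qed.

Lemma conv_in_dist_const_above :
  c < a -> Un_cv (fun k => mu (fun eta => Yk k eta <= c)) 0.
Proof.
  intro Hca.
  specialize (HY c (cdf_const_continuity n mu a c ltac:(lra))).
  cbv beta in HY.
  replace (fun _ : Seq n => a <= c) with (fun _ : Seq n => False) in HY
    by (apply pred_ext; split; intro; [contradiction | lra]).
  rewrite (prob_measure_empty n mu Hmu) in HY; exact HY.
Qed.

End ConvergenceToConstant.

Lemma diff_private_state_cdf n adj (f g : Vec n -> Vec n -> Vec n)
  (Hfc : continuous2 n f) (Hfl : f_local n adj f) mu eps delta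
  (Hdp : diff_private n f g mu eps delta) th1 th2 (i : Idx n) c k :
  adjacent n delta th1 th2 -> th1 i = th2 i ->
  mu (fun eta => theta n f g th1 eta k i <= c) <=
  exp eps * mu (fun eta => theta n f g th2 eta k i <= c).
Proof.
  intros Hadj Hi.
  set (O := fun x : Seq n => state_of_messages n f th1 x k i <= c).
  assert (HO : Borel n O).
  { apply Borel_le; intros s e He.
    destruct (state_of_messages_continuous n f Hfc th1 k s e He) as [N [d [Hd H]]].
    exists N, d; split; [exact Hd|]; intros t Ht; exact (H t Ht i). }
  pose proof (Hdp th1 th2 Hadj O HO) as H.
  replace (fun eta => O (X n f g th1 eta))
    with (fun eta => theta n f g th1 eta k i <= c) in H
    by (apply pred_ext; intro eta; unfold O; rewrite theta_state_of_messages; tauto).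
  replace (fun eta => O (X n f g th2 eta))
    with (fun eta => theta n f g th2 eta k i <= c) in H
    by (apply pred_ext; intro eta; unfold O;
        rewrite theta_state_of_messages, (state_of_messages_local n f adj Hfl th1 th2 i Hi);
        tauto).
  exact H.
Qed.

Definition scaled_e0 (n : nat) (a : R) : Vec n :=
  fun j => if Nat.eqb (proj1_sig j) 0 then a else 0.

Lemma sum_f_R0_supported_at_0 (h : nat -> R) a N :
  (forall m, h m = if Nat.eqb m 0 then a else 0) -> sum_f_R0 h N = a.
Proof.
  intro H; induction N as [|N IH].
  - simpl; rewrite H; reflexivity.
  - cbn [sum_f_R0]; rewrite IH, H; simpl; ring.
Qed.

Lemma Ave_scaled_e0 n a : (0 < n)%nat -> Ave n (scaled_e0 n a) = a / INR n.
Proof.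
  intro Hn; unfold Ave, Rdiv; rewrite Rmult_comm; f_equal.
  apply sum_f_R0_supported_at_0; intro m.
  unfold coord, scaled_e0; destruct (lt_dec m n); simpl;
    destruct (Nat.eqb m 0) eqn:E; try reflexivity.
  apply Nat.eqb_eq in E; lia.
Qed.

Lemma adjacent_scaled_e0 n delta a b :
  (0 < n)%nat -> Rabs (b - a) <= delta -> adjacent n delta (scaled_e0 n a) (scaled_e0 n b).
Proof.
  intros Hn Hab; exists (exist _ 0%nat Hn); split; [exact Hab|].
  intros [j hj] Hj; unfold scaled_e0; simpl.
  destruct (Nat.eqb j 0) eqn:E; [|reflexivity].
  apply Nat.eqb_eq in E; subst j.
  exfalso; apply Hj; f_equal; apply Peano_dec.le_unique.
Qed.

Theorem mainTheorem1 (n : nat) (Hn : (2 <= n)%nat)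
  (adj : Idx n -> Idx n -> Prop) (Hadj : undirected n adj)
  (f g : Vec n -> Vec n -> Vec n)
  (Hfc : continuous2 n f) (Hgc : continuous2 n g)
  (Hfl : f_local n adj f) (Hgl : g_local n g)
  (mu : (Seq n -> Prop) -> R) (Hmu : prob_measure n mu)
  (delta eps : R) (Hdelta : 0 < delta) (Heps : 0 < eps) :
  ~ ((forall (th0 : Vec n) (i : Idx n),
        conv_in_dist n mu (fun k eta => theta n f g th0 eta k i)
                          (fun _ => Ave n th0)) /\
     diff_private n f g mu eps delta).
Proof.
  intros [Hconv Hdp].
  assert (Hn0 : (0 < n)%nat) by lia.
  set (i := exist (fun m => (m < n)%nat) 1%nat Hn).
  set (c := delta / INR n / 2).
  assert (Hc : 0 < c < delta / INR n).
  { assert (0 < delta / INR n) by (apply Rdiv_lt_0_compat; [lra | apply lt_0_INR; lia]).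
    unfold c; lra. }
  pose proof (Hconv (scaled_e0 n 0) i) as Hconv0.
  pose proof (Hconv (scaled_e0 n delta) i) as Hconv_delta.
  rewrite Ave_scaled_e0 in Hconv0, Hconv_delta by exact Hn0.
  unfold Rdiv at 1 in Hconv0; rewrite Rmult_0_l in Hconv0.
  apply (cv_le_scaled_absurd _ _ (exp eps)
           (conv_in_dist_const_below n mu Hmu _ 0 c Hconv0 ltac:(lra))
           (conv_in_dist_const_above n mu Hmu _ _ c Hconv_delta ltac:(lra))).
  intro k; apply (diff_private_state_cdf n adj f g Hfc Hfl mu eps delta Hdp); [|reflexivity].
  apply adjacent_scaled_e0; [exact Hn0 | rewrite Rminus_0_r, Rabs_right; lra].
Qed.
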